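(* Let $S\subseteq\Sigma^*$ and $T\subseteq\Sigma^+$ be regular languages of finite words, and let $T^\omega=\{x_1x_2x_3\cdots : x_i\in T\}$. Then $$\Psi(S\cdot T^\omega)=\{\Psi(y)\oplus\mathfrak{m}_\Gamma \;:\; y\in S\cdot T^*,\ \mathfrak{m}_\Gamma\in I(T)\},$$ where for nonempty $\Gamma\subseteq\Sigma$, $\mathfrak{m}_\Gamma$ is the mask with $\mathfrak{m}_\Gamma(\sigma)=\infty$ iff $\sigma\in\Gamma$, and $I(T)$ is the set of masks $\mathfrak{m}_\Gamma$ ($\emptyset\neq\Gamma\subseteq\Sigma$) such that for every $\sigma\in\Gamma$ there exists $w\in T\cap\Gamma^*$ in which $\sigma$ occurs.
   Context: For a finite word $x$, $\Psi(x)\in\mathbb{N}^\Sigma$ is its Parikh image (number of occurrences of each letter). For an infinite word $w\in\Sigma^\omega$, $\Psi(w)\in\mathbb{N}_\infty^\Sigma$ gives for each letter its number of occurrences if finite and $\infty$ otherwise; $\Psi(L)=\{\Psi(w):w\in L\}$. A mask is a vector in $\{0,\infty\}^\Sigma\setminus\{\vec 0\}$; for $\vec x\in\mathbb{N}^\Sigma$ and a mask $\mathfrak{m}$, $\vec x\oplus\mathfrak{m}$ has coordinate $\vec x(\sigma)$ where $\mathfrak{m}(\sigma)=0$ and $\infty$ where $\mathfrak{m}(\sigma)=\infty$. *)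

From mathcomp Require Import all_boot.
Set Implicit Arguments. Unset Strict Implicit. Unset Printing Implicit Defensive.

Definition lang (Sigma : finType) := seq Sigma -> Prop.

Record dfa (Sigma : finType) := DFA {
  dfa_state : finType;
  dfa_s0 : dfa_state;
  dfa_acc : pred dfa_state;
  dfa_delta : dfa_state -> Sigma -> dfa_state }.

Definition dfa_accepts (Sigma : finType) (A : dfa Sigma) (w : seq Sigma) : bool :=
  @dfa_acc Sigma A (foldl (@dfa_delta Sigma A) (@dfa_s0 Sigma A) w).

Definition regular (Sigma : finType) (L : lang Sigma) : Prop :=
  exists A : dfa Sigma, forall w, L w <-> dfa_accepts A w.

(* Infinite words: nat -> Sigma.  Extended naturals N_oo: option nat, None = oo. *)
Definition prefix (Sigma : finType) (w : nat -> Sigma) (n : nat) : seq Sigma := mkseq w n.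

(* parikh_inf w v  <->  v = Psi(w): for each letter, v is the number of its
   occurrences in w if finite, and oo (None) if it occurs infinitely often. *)
Definition parikh_inf (Sigma : finType) (w : nat -> Sigma) (v : Sigma -> option nat) : Prop :=
  forall a : Sigma,
    match v a with
    | None => forall N, exists i, N <= i /\ w i = a
    | Some n => exists N, (forall i, N <= i -> w i <> a) /\ count_mem a (prefix w N) = n
    end.

Definition parikh (Sigma : finType) (y : seq Sigma) : Sigma -> nat := fun a => count_mem a y.

Definition mask_add (Sigma : finType) (x : Sigma -> nat) (G : {set Sigma}) : Sigma -> option nat :=
  fun a => if a \in G then None else Some (x a).

(* S . T^omega : s x_1 x_2 ... with s in S, x_i in T. Since the x_i are nonempty
   (T subset Sigma^+), the prefixes s x_1 ... x_n determine the infinite word. *)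
Definition in_S_Tomega (Sigma : finType) (S T : lang Sigma) (w : nat -> Sigma) : Prop :=
  exists s : seq Sigma, exists x : nat -> seq Sigma,
    S s /\ (forall i, T (x i)) /\
    forall n, let u := s ++ flatten (mkseq x n) in prefix w (size u) = u.

Definition in_S_Tstar (Sigma : finType) (S T : lang Sigma) (y : seq Sigma) : Prop :=
  exists s : seq Sigma, exists xs : seq (seq Sigma),
    S s /\ (forall t, t \in xs -> T t) /\ y = s ++ flatten xs.

Definition in_I (Sigma : finType) (T : lang Sigma) (G : {set Sigma}) : Prop :=
  G != set0 /\
  forall a, a \in G -> exists w : seq Sigma, T w /\ all (fun b => b \in G) w /\ a \in w.

From Pilot Require Import Defs.
From mathcomp Require Import all_boot.
From mathcomp Require Import zify.
Set Implicit Arguments. Unset Strict Implicit. Unset Printing Implicit Defensive.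

(* A word w = s x_0 x_1 ... of S.T^omega (all x_i
   nonempty) is the limit of its "block prefixes" s x_0 ... x_(n-1).
   - Soundness: finitely many letters each occur finitely often, so after some
     position N only letters of G = {a | Psi(w)(a) = oo} occur.  Taking y to be
     the block prefix s x_0 ... x_(N-1) in S.T^*, every block x_j with j >= N is
     a word of T over G, and every a in G lies in such a block (it occurs
     infinitely often); the finite coordinates of Psi(w) are already counted
     in y.  Hence Psi(w) = Psi(y) (+) m_G with m_G in I(T).
   - Completeness: given y = s x_0 ... x_(k-1) and m_G in I(T), choose finitely
     many words of T over G covering all letters of G, and append them to y
     cyclically forever.  The resulting word has Parikh image Psi(y) (+) m_G. *)

Section Blocks.
Variables (Sigma : finType) (s : seq Sigma) (x : nat -> seq Sigma).

Definition block_prefix (n : nat) : seq Sigma := s ++ flatten (mkseq x n).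

Lemma block_prefixS n : block_prefix n.+1 = block_prefix n ++ x n.
Proof. by rewrite /block_prefix mkseqS -cats1 flatten_cat /= cats0 catA. Qed.

Lemma block_prefix_ext m n : m <= n ->
  exists r, block_prefix n = block_prefix m ++ r.
Proof.
move=> /subnKC <-; elim: (n - m) => [|d [r IH]].
  by exists [::]; rewrite addn0 cats0.
by exists (r ++ x (m + d)); rewrite addnS block_prefixS IH catA.
Qed.

Lemma size_block_prefix_mono m n : m <= n ->
  size (block_prefix m) <= size (block_prefix n).
Proof. by case/block_prefix_ext=> r ->; rewrite size_cat leq_addr. Qed.

Hypothesis x_neq0 : forall i, x i <> [::].

Lemma size_block_prefix n : n <= size (block_prefix n).
Proof.
elim: n => [|n IH] //; rewrite block_prefixS size_cat.
by have := @x_neq0 n; case: (x n) => //= a l _; lia.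
Qed.

Lemma limit_word_exists :
  exists w : nat -> Sigma, forall n, Defs.prefix w (size (block_prefix n)) = block_prefix n.
Proof.
have [a0 _] : exists a0 : Sigma, True by have := @x_neq0 0; case: (x 0) => // a _ _; exists a.
exists (fun i => nth a0 (block_prefix i.+1) i) => n.
apply: (@eq_from_nth _ a0); first by rewrite size_mkseq.
move=> i; rewrite size_mkseq => lt_i; rewrite nth_mkseq //.
have [r1 E1] := block_prefix_ext (leq_maxl n i.+1).
have [r2 E2] := block_prefix_ext (leq_maxr n i.+1).
have lt_i' : i < size (block_prefix i.+1) := size_block_prefix i.+1.
by move: (congr1 (nth a0 ^~ i) E1); rewrite E2 !nth_cat lt_i lt_i' => ->.
Qed.

Variable w : nat -> Sigma.
Hypothesis w_prefix : forall n, Defs.prefix w (size (block_prefix n)) = block_prefix n.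

Lemma nth_block j q d : q < size (x j) -> w (size (block_prefix j) + q) = nth d (x j) q.
Proof.
move=> lt_q; have lt_p : size (block_prefix j) + q < size (block_prefix j.+1).
  by rewrite block_prefixS size_cat ltn_add2l.
rewrite -(nth_mkseq d w lt_p) -/(Defs.prefix w _) w_prefix block_prefixS.
by rewrite nth_cat ltnNge leq_addr /= addKn.
Qed.

Lemma mem_block j c : c \in x j -> exists2 i, j <= i & w i = c.
Proof.
case/(nthP c)=> q lt_q <-; exists (size (block_prefix j) + q); last exact: nth_block.
exact: leq_trans (size_block_prefix j) (leq_addr _ _).
Qed.

Lemma block_of_position m p : size (block_prefix m) <= p -> exists2 j, m <= j & w p \in x j.
Proof.
move=> le_mp.
suff [j [le_mj [q [lt_q ->]]]] : exists j, m <= j /\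
    exists q, q < size (x j) /\ p = size (block_prefix j) + q.
  by exists j; rewrite // (nth_block (w 0) lt_q) mem_nth.
have [n lt_pn] : exists n, p < size (block_prefix n).
  by exists p.+1; apply: size_block_prefix.
elim: n lt_pn => [|n IH]; first by move=> lt_p; move: (size_block_prefix_mono (leq0n m)); lia.
rewrite block_prefixS size_cat => lt_p.
have [/IH //|le_np] := ltnP p (size (block_prefix n)).
exists n; split; last by exists (p - size (block_prefix n)); split; lia.
rewrite leqNgt; apply/negP => lt_nm.
by move: (size_block_prefix_mono lt_nm); rewrite block_prefixS size_cat; lia.
Qed.

End Blocks.

Lemma uniform_tail (A : eqType) (P : A -> nat -> Prop) (l : seq A) :
  (forall a, exists N, forall i, N <= i -> P a i) ->
  exists N, forall a i, a \in l -> N <= i -> P a i.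
Proof.
move=> tailP; elim: l => [|b l [N IH]]; first by exists 0.
have [Nb Hb] := tailP b; exists (maxn N Nb) => a i.
rewrite inE geq_max => /orP[/eqP -> | a_l] /andP[le_N le_Nb]; first exact: Hb.
exact: IH.
Qed.

Section ParikhInfinite.
Variables (Sigma : finType) (w : nat -> Sigma).

Lemma count_prefix_stable (a : Sigma) M d :
  (forall i, M <= i -> w i <> a) ->
  count_mem a (Defs.prefix w (M + d)) = count_mem a (Defs.prefix w M).
Proof.
move=> not_a; elim: d => [|d IH]; first by rewrite addn0.
rewrite addnS /Defs.prefix mkseqS -cats1 count_cat -/(Defs.prefix w (M + d)) IH /=.
have /negbTE -> : w (M + d) != a by apply/eqP; apply: not_a; rewrite leq_addr.
by rewrite !addn0.
Qed.

Variable v : Sigma -> option nat.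
Hypothesis w_v : parikh_inf w v.

Lemma parikh_inf_tail : exists N, forall i, N <= i -> v (w i) = None.
Proof.
have [N HN] : exists N, forall a i, a \in enum Sigma -> N <= i -> w i = a -> v a = None.
  apply: uniform_tail => a; have := w_v a; case: (v a) => [n [N [not_a _]]|_].
    by exists N => i /not_a.
  by exists 0.
by exists N => i le_Ni; apply: (HN (w i) i _ le_Ni); rewrite ?mem_enum.
Qed.

Lemma parikh_inf_count (a : Sigma) n M :
  v a = Some n -> (forall i, M <= i -> w i <> a) -> count_mem a (Defs.prefix w M) = n.
Proof.
move=> va not_a; have := w_v a; rewrite va => -[N [not_a' <-]].
rewrite -(count_prefix_stable (maxn M N - M) not_a).
rewrite -(count_prefix_stable (maxn M N - N) not_a').
by rewrite !subnKC ?leq_maxl ?leq_maxr.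
Qed.

End ParikhInfinite.

Lemma parikh_inf_mask (Sigma : finType) (w : nat -> Sigma) (G : {set Sigma}) M :
  (forall i, M <= i -> w i \in G) ->
  (forall a, a \in G -> forall N, exists i, N <= i /\ w i = a) ->
  parikh_inf w (mask_add (parikh (Defs.prefix w M)) G).
Proof.
move=> tail_G inf_G a; rewrite /mask_add; case: ifP => [/inf_G // | a_G].
exists M; split=> [i /tail_G|//].
by move=> + wi_a; rewrite wi_a a_G.
Qed.

Lemma cover_by_words (Sigma : finType) (P : seq Sigma -> Prop) (l : seq Sigma) :
  (forall a, a \in l -> exists2 t, P t & a \in t) ->
  exists ws : seq (seq Sigma),
    (forall t, t \in ws -> P t) /\ (forall a, a \in l -> exists2 t, t \in ws & a \in t).
Proof.
elim: l => [|b l IH] cover; first by exists [::].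
have [|ws [ws_P ws_cover]] := IH; first by move=> a a_l; apply: cover; rewrite inE a_l orbT.
have [t t_P b_t] := cover b (mem_head b l).
exists (t :: ws); split=> [u | a]; first by rewrite inE => /orP[/eqP -> | /ws_P].
rewrite inE => /orP[/eqP -> | /ws_cover [u u_ws a_u]]; first by exists t; rewrite ?mem_head.
by exists u; rewrite // inE u_ws orbT.
Qed.

Section CycleAfter.
Variables (A : eqType) (d : A) (xs ws : seq A).

Definition cycle_after (i : nat) : A :=
  if i < size xs then nth d xs i else nth d ws ((i - size xs) %% size ws).

Lemma mkseq_cycle_after : mkseq cycle_after (size xs) = xs.
Proof.
apply: (@eq_from_nth _ d); rewrite size_mkseq // => i lt_i.
by rewrite nth_mkseq // /cycle_after lt_i.
Qed.

Lemma cycle_after_head i : i < size xs -> cycle_after i \in xs.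
Proof. by move=> lt_i; rewrite /cycle_after lt_i mem_nth. Qed.

Hypothesis ws_gt0 : 0 < size ws.

Lemma cycle_after_tail i : size xs <= i -> cycle_after i \in ws.
Proof. by rewrite /cycle_after ltnNge => ->; rewrite mem_nth ?ltn_pmod. Qed.

Lemma cycle_after_recurrent t N : t \in ws -> exists2 j, N <= j & cycle_after j = t.
Proof.
case/(nthP d)=> k lt_k <-; exists (size xs + (N * size ws + k)).
  by rewrite (leq_trans _ (leq_addl _ _)) // (leq_trans (leq_pmulr N ws_gt0)) ?leq_addr.
by rewrite /cycle_after ltnNge leq_addr /= addKn modnMDl modn_small.
Qed.

End CycleAfter.

Section ParikhOmegaPower.
Variables (Sigma : finType) (S T : lang Sigma).
Hypothesis T_neq0 : forall t, T t -> t <> [::].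

Lemma Tomega_parikh_sound (w : nat -> Sigma) (v : Sigma -> option nat) :
  in_S_Tomega S T w -> parikh_inf w v ->
  exists (y : seq Sigma) (G : {set Sigma}),
    in_S_Tstar S T y /\ in_I T G /\ v =1 mask_add (parikh y) G.
Proof.
case=> s [x [Ss [Tx w_prefix]]] w_v.
have {}w_prefix n : Defs.prefix w (size (block_prefix s x n)) = block_prefix s x n.
  exact: w_prefix.
have x_neq0 i : x i <> [::] := T_neq0 (Tx i).
have [N tail_inf] := parikh_inf_tail w_v.
pose G := [set a | v a == None].
have tail_G i : N <= i -> w i \in G by move=> /tail_inf; rewrite inE => ->.
exists (block_prefix s x N), G; split; [|split].
- exists s, (mkseq x N); do 2!split=> //.
  by move=> t /mapP[i _ ->].
- split; first by apply/set0Pn; exists (w N); apply: tail_G.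
  move=> a; rewrite inE => /eqP va.
  have := w_v a; rewrite va => /(_ (size (block_prefix s x N))) [i [le_i <-]].
  have [j le_Nj wi_xj] := block_of_position x_neq0 w_prefix le_i.
  exists (x j); do 2!split=> //.
  apply/allP=> c /(mem_block x_neq0 w_prefix) [k le_jk <-].
  exact/tail_G/(leq_trans le_Nj).
- move=> a; rewrite /mask_add inE; case: eqP => [-> // | va_neq].
  case va: (v a) va_neq => [n|] // _; congr (Some _); rewrite /parikh -(w_prefix N).
  apply/esym/(parikh_inf_count w_v va) => i le_i wi_a.
  by have := tail_inf i (leq_trans (size_block_prefix s x_neq0 N) le_i); rewrite wi_a va.
Qed.

Lemma Tomega_parikh_complete (y : seq Sigma) (G : {set Sigma}) :
  in_S_Tstar S T y -> in_I T G ->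
  exists w : nat -> Sigma, in_S_Tomega S T w /\ parikh_inf w (mask_add (parikh y) G).
Proof.
case=> s [xs [Ss [Txs ->]]] [G_neq0 G_cover].
have [|ws [ws_ok ws_cover]] :=
  @cover_by_words _ (fun t => T t /\ all (fun b => b \in G) t) (enum G).
  by move=> a; rewrite mem_enum => /G_cover [t [Tt [Gt a_t]]]; exists t.
have ws_gt0 : 0 < size ws.
  have [a0 a0_G] := set0Pn _ G_neq0.
  have [t t_ws _] : exists2 t, t \in ws & a0 \in t by apply: ws_cover; rewrite mem_enum.
  by case: ws t_ws {ws_ok ws_cover}.
pose x := cycle_after [::] xs ws.
have x_tail i : size xs <= i -> T (x i) /\ all (fun b => b \in G) (x i).
  by move=> /(cycle_after_tail [::] ws_gt0)/ws_ok.
have Tx i : T (x i).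
  by case: (ltnP i (size xs)) => [/(cycle_after_head [::] ws)/Txs | /x_tail []].
have x_neq0 i : x i <> [::] := T_neq0 (Tx i).
have [w w_prefix] := limit_word_exists s x_neq0.
have y_prefix : block_prefix s x (size xs) = s ++ flatten xs.
  by rewrite /block_prefix mkseq_cycle_after.
exists w; split; first by exists s, x.
rewrite -y_prefix -(w_prefix (size xs)).
apply: parikh_inf_mask => [i /(block_of_position x_neq0 w_prefix) [j le_j wi_xj] |].
  by have /allP := (x_tail j le_j).2; apply.
move=> a; rewrite -mem_enum => /ws_cover [t t_ws a_t] N.
have [j le_Nj xj_t] := cycle_after_recurrent [::] xs ws_gt0 N t_ws.
rewrite -xj_t in a_t; have [i le_ji wi_a] := mem_block x_neq0 w_prefix a_t.
by exists i; split=> //; apply: leq_trans le_ji.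
Qed.

End ParikhOmegaPower.

Theorem mainTheorem2 (Sigma : finType) (S T : lang Sigma) :
  regular S -> regular T -> (forall t, T t -> t <> [::]) ->
  forall v : Sigma -> option nat,
    (exists w : nat -> Sigma, in_S_Tomega S T w /\ parikh_inf w v) <->
    (exists (y : seq Sigma) (G : {set Sigma}),
        in_S_Tstar S T y /\ in_I T G /\ v =1 mask_add (parikh y) G).
Proof.
move=> _ _ T_neq0 v; split=> [[w [w_STomega w_v]] | [y [G [y_STstar [G_I v_eq]]]]].
  exact: (Tomega_parikh_sound T_neq0 w_STomega w_v).
have [w [w_STomega w_v]] := Tomega_parikh_complete T_neq0 y_STstar G_I.
exists w; split=> // a; rewrite v_eq; exact: w_v.
Qed.
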